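(* Let $n,m,t,\ell$ be positive integers with $\ell\le t$, let $\sigma\in\mathcal{S}_n$, and let $i_1,\ldots,i_\ell\in[n]$ be distinct positions such that $\sigma(i_j)>m$ for all $j\in[\ell]$ and $\sigma(i_j)\le\sigma(i_{j+1})-2$ for $j\in[\ell-1]$. Define $\sigma_e\in[n]^n$ by $\sigma_e(i)=\sigma(i)-1$ for $i\in\{i_1,\ldots,i_\ell\}$ and $\sigma_e(i)=\sigma(i)$ otherwise. For each $j\in[\ell]$ let $i'_j$ be the position with $\sigma(i'_j)=\sigma(i_j)-1$, so that $\sigma_e(i_j)=\sigma_e(i'_j)=\sigma(i_j)-1$ are repeated values of $\sigma_e$. Then for every $i\in[n]$, $$\mathcal{L}(\sigma_e)(i)=\begin{cases}\mathcal{L}(\sigma)(i)-1,&\text{if } i=i'_j \text{ and } i'_j>i_j \text{ for some } j\in[\ell],\\ \mathcal{L}(\sigma)(i),&\text{otherwise.}\end{cases}$$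
   Context: $[n]=\{1,\ldots,n\}$ and $\mathcal{S}_n$ is the set of permutations of $[n]$, written as sequences $(\sigma(1),\ldots,\sigma(n))$. For any sequence $\pi\in[n]^n$, its Lehmer encoding $\mathcal{L}(\pi)$ is the sequence with $\mathcal{L}(\pi)(i)=|\{j: j<i,\ \pi(j)>\pi(i)\}|$ for $i\in[n]$. *)

From mathcomp Require Import all_boot all_fingroup.
Set Implicit Arguments. Unset Strict Implicit. Unset Printing Implicit Defensive.

(* Positions [n] are represented by 'I_n (position i+1 <-> ordinal i);
   a sequence pi in [n]^n is a function 'I_n -> nat (values as in the paper). *)

Definition lehmer (n : nat) (p : 'I_n -> nat) (i : 'I_n) : nat :=
  #|[set j : 'I_n | (j < i) && (p i < p j)]|.

Definition permval (n : nat) (s : 'S_n) (i : 'I_n) : nat := (s i).+1.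

Definition sigma_e (n l : nat) (s : 'S_n) (idx : 'I_l -> 'I_n) (i : 'I_n) : nat :=
  if [exists j, idx j == i] then (permval s i).-1 else permval s i.

From mathcomp Require Import all_boot all_fingroup.
From mathcomp Require Import zify.

Set Implicit Arguments.
Unset Strict Implicit.
Unset Printing Implicit Defensive.

(* Lowering the values of an injective sequence by one on a set D of positions
   can only destroy the inversions (j, i) with j in D, i not in D and
   p(j) = p(i) + 1; the spacing hypothesis makes sure that such an i is never
   itself in D, and injectivity leaves at most one candidate j for each i,
   namely the position carrying the value p(i) + 1. *)

Section DecrementOn.

Variables (n : nat) (p : 'I_n -> nat) (D : pred 'I_n).
Hypotheses (p_inj : injective p) (p_gt0 : forall i, 0 < p i).

Definition decr_on (i : 'I_n) : nat := if D i then (p i).-1 else p i.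

Lemma decr_on_lt x y : x != y ->
  (decr_on y < decr_on x) =
  (p y < p x) && ~~ [&& D x, ~~ D y & p x == (p y).+1].
Proof.
move=> neq_xy; have neq_pxy : p x != p y by apply: contra neq_xy => /eqP/p_inj->.
have := p_gt0 x; have := p_gt0 y; rewrite /decr_on.
by case: (D x); case: (D y) => /=; lia.
Qed.

Lemma lehmer_decr_on (i : 'I_n) :
  (forall j : 'I_n, j < i -> D j -> ~~ D i -> p j != (p i).+1) ->
  lehmer decr_on i = lehmer p i.
Proof.
move=> no_lost; apply: eq_card => j; rewrite !inE.
have [lt_ji|] := ltnP j i; last by [].
rewrite decr_on_lt; last by rewrite neq_ltn lt_ji.
case: (D j) (D i) (no_lost j lt_ji) => [] [] /=; rewrite ?andbT // => /(_ isT isT).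
by move/negbTE->; rewrite andbT.
Qed.

Lemma lehmer_decr_on_lost (i j : 'I_n) : j < i -> D j -> ~~ D i -> p j = (p i).+1 ->
  lehmer decr_on i = (lehmer p i).-1.
Proof.
move=> lt_ji Dj notDi pj; rewrite /lehmer.
have -> : [set k : 'I_n | (k < i) && (decr_on i < decr_on k)] =
          [set k : 'I_n | (k < i) && (p i < p k)] :\ j.
  apply/setP => k; rewrite !inE.
  have [lt_ki|] := ltnP k i; last by rewrite andbF.
  rewrite decr_on_lt ?notDi /=; last by rewrite neq_ltn lt_ki.
  have [->|neq_kj] := eqVneq k j; first by rewrite Dj pj eqxx andbF.
  have neq_p : p k != (p i).+1 by rewrite -pj; apply: contra neq_kj => /eqP/p_inj->.
  by rewrite (negbTE neq_p) andbF andbT.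
by rewrite [in RHS](cardsD1 j) !inE lt_ji pj ltnSn.
Qed.

End DecrementOn.

Lemma no_successor_values l (f : 'I_l -> nat) :
  (forall j k : 'I_l, val k = (val j).+1 -> f j + 2 <= f k) ->
  forall j k : 'I_l, f j != (f k).+1.
Proof.
case: l f => [f _ [] //|l f f_step].
pose g x := f (inord x).
have g_mono x y : x < y <= l -> g x + 2 <= g y.
  case/andP=> lt_xy le_yl.
  apply: (@homo_ltn_in _ (gtn l.+1) g (fun a b => a + 2 <= b)) => //.
  - by move=> b a c; lia.
  - move=> a b; rewrite !unfold_in /= => _ lt_bl c /andP[_ lt_cb].
    by rewrite unfold_in /=; lia.
  - move=> a _; rewrite unfold_in /= => lt_a1l; apply: f_step.
    by rewrite /= !inordK //; lia.
  - by rewrite unfold_in /=; lia.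
have fE (j : 'I_l.+1) : f j = g j by rewrite /g inord_val.
move=> j k; rewrite !fE.
have := ltn_ord j; have := ltn_ord k.
case: (ltngtP j k) => [lt_jk|lt_kj|->] lt_kl lt_jl.
- by have := g_mono j k; rewrite lt_jk /=; lia.
- by have := g_mono k j; rewrite lt_kj /=; lia.
- by lia.
Qed.

Lemma permval_inj n (s : 'S_n) : injective (permval s).
Proof. by move=> x y [] /val_inj/perm_inj. Qed.

Lemma permval_gt0 n (s : 'S_n) i : 0 < permval s i.
Proof. by []. Qed.

Theorem lemma1 (n m t l : nat) (s : 'S_n) (idx : 'I_l -> 'I_n) :
  0 < n -> 0 < m -> 0 < t -> 0 < l -> l <= t ->
  injective idx ->
  (forall j : 'I_l, m < permval s (idx j)) ->
  (forall j k : 'I_l, val k = (val j).+1 ->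
     permval s (idx j) <= permval s (idx k) - 2) ->
  forall i : 'I_n,
    lehmer (sigma_e s idx) i =
    if [exists j : 'I_l, (permval s i == (permval s (idx j)).-1) && (idx j < i)]
    then (lehmer (permval s) i).-1
    else lehmer (permval s) i.
Proof.
move=> _ _ _ _ _ _ _ spaced i.
pose D i := [exists j, idx j == i].
have sigma_eE : sigma_e s idx = decr_on (permval s) D by [].
have no_succ j k : permval s (idx j) != (permval s (idx k)).+1.
  apply: (no_successor_values (f := permval s \o idx)) => {}j {}k /spaced /=.
  by have := permval_gt0 s (idx j); lia.
rewrite sigma_eE; case: ifP => [/existsP[k /andP[/eqP si lt_ki]] | no_lost].
  have pk : permval s (idx k) = (permval s i).+1.
    by rewrite si prednK ?permval_gt0.
  apply: (lehmer_decr_on_lost (@permval_inj _ s) (permval_gt0 s) lt_ki).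
  - by apply/existsP; exists k.
  - by apply/existsP => -[j /eqP ji]; move: (no_succ k j); rewrite ji pk eqxx.
  - exact: pk.
apply: (lehmer_decr_on (@permval_inj _ s) (permval_gt0 s)).
move=> j lt_ji /existsP[k /eqP kj] _; subst j.
apply: contraFN no_lost => /eqP pk.
by apply/existsP; exists k; rewrite pk /= eqxx lt_ji.
Qed.
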